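(* Let $p_1$ and $p_2$ be probability densities on $\mathbb{R}^n$ and $\omega\in[0,1]$, and let $\mathbf{M}^h_\omega(p_1,p_2)=\frac{1}{\zeta^h}\frac{p_1p_2}{(1-\omega)p_1+\omega p_2}$ be the normalized harmonic mean density, where $\zeta^h=\int_{\mathbb{R}^n}\frac{p_1(\mathbf{x})p_2(\mathbf{x})}{(1-\omega)p_1(\mathbf{x})+\omega p_2(\mathbf{x})}d\mathbf{x}$ (assumed positive). Then \[ \mathbb{D}\big(p_1:\mathbf{M}^h_\omega(p_1,p_2)\big)\le \mathbb{D}(p_1:p_2)\quad\text{and}\quad \mathbb{D}\big(p_2:\mathbf{M}^h_\omega(p_1,p_2)\big)\le \mathbb{D}(p_2:p_1). \]
   Context: $\mathbb{D}(p:q)=\int p(\mathbf{x})\ln\frac{p(\mathbf{x})}{q(\mathbf{x})}d\mathbf{x}\in[0,\infty]$ denotes the (forward) Kullback–Leibler divergence from $p$ to $q$; in general $\mathbb{D}(p:q)\neq\mathbb{D}(q:p)$. The quotient in the harmonic mean is taken to be $0$ where its numerator vanishes. *)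

From mathcomp Require Import all_boot all_order all_algebra.
From mathcomp Require Import all_classical all_reals all_analysis.
Set Implicit Arguments. Unset Strict Implicit. Unset Printing Implicit Defensive.
Import Order.TTheory GRing.Theory Num.Theory.
Local Open Scope ring_scope.
Local Open Scope ereal_scope.

Section Defs.
Context {d : measure_display} {T : measurableType d} {R : realType}.
Variable mu : {measure set T -> \bar R}.

Definition is_density (p : T -> R) : Prop :=
  [/\ measurable_fun setT p, (forall x, (0 <= p x)%R) &
      \int[mu]_x (p x)%:E = 1].

Definition kl_pt (a b : R) : \bar R :=
  if a == 0%R then 0 else if b == 0%R then +oo else (a * ln (a / b))%:E.

Definition KL (p q : T -> R) : \bar R := \int[mu]_x kl_pt (p x) (q x).

Definition harm (w a b : R) : R :=
  if (a * b == 0)%R then 0%R else (a * b / ((1 - w) * a + w * b))%R.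

Definition zeta_h (w : R) (p1 p2 : T -> R) : \bar R :=
  \int[mu]_x (harm w (p1 x) (p2 x))%:E.

Definition Mh (w : R) (p1 p2 : T -> R) : T -> R :=
  fun x => (harm w (p1 x) (p2 x) / fine (zeta_h w p1 p2))%R.
End Defs.

From mathcomp Require Import all_boot all_order all_algebra.
From mathcomp Require Import all_classical all_reals all_analysis.
From mathcomp Require Import ring lra measurable_realfun.
Set Implicit Arguments. Unset Strict Implicit. Unset Printing Implicit Defensive.
Import Order.TTheory GRing.Theory Num.Theory.
Local Open Scope ring_scope.

(* Write m = (1 - w) a + w b, so that harm w a b = a b / m, and let z = zeta_h.
   For a, b > 0, a ln (a z m / (a b)) = a ln (a / b) + a ln (z m / a), and
   ln t <= t - 1 bounds the last term by z m - a.  Integrated against p1 this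
   correction term gives z - 1 <= 0, since the weighted harmonic mean is below
   the arithmetic mean w a + (1 - w) b, whose integral is 1.  The integrand of
   KL(p1 : p2) is bounded below by p1 - p2, so it is integrable unless the
   divergence is +oo.  The second inequality is the first one with
   (p1, p2, w) replaced by (p2, p1, 1 - w). *)

Section pointwise.
Variable R : realType.
Implicit Types a b c w z : R.

Lemma mul_ln_div_le a c : 0 < a -> 0 < c -> a * ln (c / a) <= c - a.
Proof.
move=> a0 c0; have ca0 : 0 < c / a by exact: divr_gt0.
have : ln (1 + (c / a - 1)) <= c / a - 1 by apply: le_ln1Dx; lra.
rewrite addrC subrK => le_ln.
have -> : c - a = a * (c / a - 1) by field; rewrite gt_eqF.
by rewrite ler_pM2l.
Qed.

Lemma kl_pt_ge_sub a b : 0 <= a -> 0 <= b -> ((a - b)%:E <= kl_pt a b)%E.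
Proof.
rewrite /kl_pt => a0 b0; have [->|an0] := eqVneq a 0.
  by rewrite lee_fin sub0r oppr_le0.
have [_|bn0] := eqVneq b 0; first exact: leey.
have ap : 0 < a by rewrite lt_def an0.
have bp : 0 < b by rewrite lt_def bn0.
rewrite lee_fin -invf_div lnV ?posrE ?divr_gt0 // mulrN lerNr opprB.
exact: mul_ln_div_le.
Qed.

Lemma harm_den_gt0 w a b : 0 <= w <= 1 -> 0 < a -> 0 < b ->
  0 < (1 - w) * a + w * b.
Proof. move=> /andP[w0 w1] a0 b0; nra. Qed.

Lemma harmE w a b : 0 < a -> 0 < b -> harm w a b = a * b / ((1 - w) * a + w * b).
Proof. by move=> a0 b0; rewrite /harm mulf_eq0 !gt_eqF. Qed.

Lemma harm_ge0 w a b : 0 <= w <= 1 -> 0 <= a -> 0 <= b -> 0 <= harm w a b.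
Proof.
move=> /andP[w0 w1] a0 b0; rewrite /harm; case: ifP => // _.
by apply: divr_ge0; nra.
Qed.

Lemma harm_le_mean w a b : 0 <= w <= 1 -> 0 <= a -> 0 <= b ->
  harm w a b <= w * a + (1 - w) * b.
Proof.
move=> w01 a0 b0; have /andP[w0 w1] := w01.
have [ab0|ab0] := eqVneq (a * b) 0; first by rewrite /harm ab0 eqxx; nra.
have [ap bp] : 0 < a /\ 0 < b.
  by move: ab0; rewrite mulf_eq0 negb_or => /andP[an0 bn0]; rewrite !lt_def an0 bn0.
rewrite harmE // ler_pdivrMr ?harm_den_gt0 //.
(* (w a + (1 - w) b) ((1 - w) a + w b) - a b = w (1 - w) (a - b)^2 *)
have : 0 <= w * (1 - w) * (a - b) ^+ 2 by rewrite mulr_ge0 ?sqr_ge0 //; nra.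
nra.
Qed.

Lemma harm_sym w a b : harm w a b = harm (1 - w) b a.
Proof. by rewrite /harm [b * a]mulrC subKr [w * b + _]addrC. Qed.

Lemma kl_pt_harm_le w z a b : 0 <= w <= 1 -> 0 < z -> 0 <= a -> 0 <= b ->
  (kl_pt a (harm w a b / z) <=
   kl_pt a b + (z * ((1 - w) * a + w * b) - a)%:E)%E.
Proof.
move=> w01 z0 a0 b0; have /andP[w0 w1] := w01; rewrite /kl_pt.
have [->|an0] := eqVneq a 0; first by rewrite add0e lee_fin subr0 mulr0 add0r !mulr_ge0 // ltW.
have [_|bn0] := eqVneq b 0; first by rewrite addye // leey.
have ap : 0 < a by rewrite lt_def an0.
have bp : 0 < b by rewrite lt_def bn0.
have mp := harm_den_gt0 w01 ap bp.
set m := (1 - w) * a + w * b in mp *.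
have Mp : 0 < a * b / m / z by rewrite !divr_gt0 ?mulr_gt0.
rewrite harmE // (gt_eqF Mp) -EFinD lee_fin.
have -> : a / (a * b / m / z) = a / b * (z * m / a) by field; rewrite !gt_eqF.
rewrite lnM ?posrE ?divr_gt0 ?mulr_gt0 // mulrDr lerD2l.
by apply: mul_ln_div_le; rewrite ?mulr_gt0.
Qed.

End pointwise.

Section measurability.
Context d (T : measurableType d) (R : realType).
Variables (p q : T -> R).
Hypotheses (mp : measurable_fun [set: T] p) (mq : measurable_fun [set: T] q).
Hypotheses (p0 : forall x, 0 <= p x) (q0 : forall x, 0 <= q x).

Lemma measurable_kl_pt : measurable_fun [set: T] (fun x => kl_pt (p x) (q x)).
Proof.
have -> : (fun x => kl_pt (p x) (q x)) = (fun x => if p x == 0 then 0%E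
    else if q x == 0 then +oo%E else (p x * (ln (p x) - ln (q x)))%:E).
  apply/funext => x; rewrite /kl_pt; have [//|pn0] := eqVneq (p x) 0.
  have [//|qn0] := eqVneq (q x) 0.
  by rewrite ln_div // posrE lt_def ?pn0 ?qn0 ?p0 ?q0.
apply: measurable_fun_ifT; [exact: measurable_fun_eqr | by [] |].
apply: measurable_fun_ifT; [exact: measurable_fun_eqr | by [] |].
apply/measurable_EFinP; apply: measurable_funM => //.
by apply: measurable_funB; apply: measurableT_comp => //; exact: measurable_ln.
Qed.

Lemma measurable_harm w : 0 <= w <= 1 ->
  measurable_fun [set: T] (fun x => harm w (p x) (q x)).
Proof.
move=> /andP[w0 w1].
pose m x := (1 - w) * p x + w * q x.
have m0 x : 0 <= m x by rewrite /m; have := p0 x; have := q0 x; nra.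
(* [y `^ (-1)] coincides with [y^-1] for [y >= 0] and is known to be measurable *)
have -> : (fun x => harm w (p x) (q x)) = (fun x => if p x * q x == 0 then 0
    else p x * q x * m x `^ (-1)).
  by apply/funext => x; rewrite /harm powR_inv1.
have mpq : measurable_fun [set: T] (fun x => p x * q x) by exact: measurable_funM.
apply: measurable_fun_ifT; [exact: measurable_fun_eqr | by [] |].
have mm : measurable_fun [set: T] m.
  by apply: measurable_funD; apply: measurable_funM => //; exact: measurable_cst.
have minv : measurable_fun [set: R] (fun y : R => y `^ (-1)) by exact: measurable_powR.
by apply: measurable_funM => //; exact: (measurableT_comp minv mm).
Qed.

End measurability.

Section integral_theory.
Context d (T : measurableType d) (R : realType).
Variable mu : {measure set T -> \bar R}.
Local Open Scope ereal_scope.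

Lemma le_integral_measurable (D : set T) (f g : T -> \bar R) : measurable D ->
  measurable_fun D f -> measurable_fun D g -> (forall x, D x -> f x <= g x) ->
  \int[mu]_(x in D) f x <= \int[mu]_(x in D) g x.
Proof.
move=> mD mf mg fg; have {}fg : {in D, forall x, f x <= g x} by move=> x /[!inE]/fg.
rewrite [leLHS]integralE [leRHS]integralE leeB //.
- apply: ge0_le_integral => //; try exact: measurable_funepos.
  by move=> x Dx; apply: (funepos_le fg); exact: mem_set.
- apply: ge0_le_integral => //; try exact: measurable_funeneg.
  by move=> x Dx; apply: (funeneg_le fg); exact: mem_set.
Qed.

Lemma integrable_ge_lty (D : set T) (f g : T -> \bar R) : measurable D ->
  measurable_fun D f -> mu.-integrable D g -> (forall x, D x -> g x <= f x) ->
  \int[mu]_(x in D) f x < +oo -> mu.-integrable D f.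
Proof.
move=> mD mf ig gf flty.
have {}gf : {in D, forall x, g x <= f x} by move=> x /[!inE]/gf.
have negf_lty : \int[mu]_(x in D) f^\- x < +oo.
  apply: le_lt_trans (integral_funeneg_lt_pinfty mD ig).
  apply: ge0_le_integral => //; try exact: measurable_funeneg.
  - by apply: measurable_funeneg; exact: measurable_int ig.
  - by move=> x Dx; apply: (funeneg_le gf); exact: mem_set.
have negf_fin : \int[mu]_(x in D) f^\- x \is a fin_num.
  by rewrite ge0_fin_numE //; apply: integral_ge0 => x _; exact: funeneg_ge0.
have posf_lty : \int[mu]_(x in D) f^\+ x < +oo.
  move: flty; rewrite integralE lteBlDr // addye //.
  by move: negf_fin; rewrite fin_numE => /andP[].
apply/integrableP; split => //.
rewrite (_ : (fun x => `|f x|) = f^\+ \+ f^\-); last by rewrite -fune_abse.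
rewrite ge0_integralD //; try exact: measurable_funepos; try exact: measurable_funeneg.
exact: lte_add_pinfty.
Qed.

Lemma le_integralD_integrable (D : set T) (f h g k : T -> \bar R) :
  measurable D -> measurable_fun D f -> measurable_fun D h ->
  mu.-integrable D g -> mu.-integrable D k ->
  (forall x, D x -> k x <= h x) -> (forall x, D x -> f x <= h x + g x) ->
  \int[mu]_(x in D) f x <= \int[mu]_(x in D) h x + \int[mu]_(x in D) g x.
Proof.
move=> mD mf mh ig ik kh fhg.
have [->|hnoo] := eqVneq (\int[mu]_(x in D) h x) +oo.
  by rewrite addye ?leey //; move: (integrable_fin_num mD ig); rewrite fin_numE => /andP[].
have ih : mu.-integrable D h by apply: integrable_ge_lty ik kh _; rewrite // ltey.
rewrite -integralD //; apply: le_integral_measurable => //.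
by apply: emeasurable_funD => //; exact: measurable_int ig.
Qed.

Lemma density_integrable (p : T -> R) : is_density mu p ->
  mu.-integrable [set: T] (EFin \o p).
Proof.
case=> mp p0 ip; apply/integrableP; split; first exact/measurable_EFinP.
under eq_integral do rewrite /= ger0_norm //.
by rewrite ip ltry.
Qed.

Section density_combination.
Variables (p q : T -> R).
Hypotheses (dp : is_density mu p) (dq : is_density mu q).

Lemma integrable_density_comb (a b : R) :
  mu.-integrable [set: T] (fun x => (a * p x + b * q x)%:E).
Proof.
have ip := density_integrable dp; have iq := density_integrable dq.
by apply: eq_integrable (integrableD _ (integrableZl _ a ip) (integrableZl _ b iq)).
Qed.

Lemma integral_density_comb (a b : R) :
  \int[mu]_x (a * p x + b * q x)%:E = (a + b)%:E.
Proof.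
have ip := density_integrable dp; have iq := density_integrable dq.
under eq_integral do rewrite EFinD !EFinM.
rewrite integralD //; try exact: integrableZl.
rewrite !integralZl //.
by case: dp => _ _ ->; case: dq => _ _ ->; rewrite !mule1.
Qed.

Lemma zeta_h_le1 (w : R) : (0 <= w <= 1)%R -> zeta_h mu w p q <= 1.
Proof.
move=> w01; have [mp p0 _] := dp; have [mq q0 _] := dq.
rewrite /zeta_h (_ : 1 = (w + (1 - w))%:E); last by rewrite addrC subrK.
rewrite -integral_density_comb.
apply: ge0_le_integral => //.
- by move=> x _; rewrite lee_fin harm_ge0.
- exact/measurable_EFinP/measurable_harm.
- exact: measurable_int (integrable_density_comb _ _).
- by move=> x _; rewrite lee_fin harm_le_mean.
Qed.

End density_combination.

End integral_theory.

Section harmonic_mean_divergence.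
Context d (T : measurableType d) (R : realType).
Variable mu : {measure set T -> \bar R}.
Variables (p q : T -> R).
Hypotheses (dp : is_density mu p) (dq : is_density mu q).
Local Open Scope ereal_scope.

Lemma KL_Mh_le (w : R) : (0 <= w <= 1)%R -> 0 < zeta_h mu w p q ->
  KL mu p (Mh mu w p q) <= KL mu p q.
Proof.
move=> w01 zeta_gt0; have [mp p0 _] := dp; have [mq q0 _] := dq.
have zeta_fin : zeta_h mu w p q \is a fin_num.
  by rewrite ge0_fin_numE ?ltW // (le_lt_trans (zeta_h_le1 dp dq w01)) ?ltry.
rewrite /KL /Mh; set z := fine (zeta_h mu w p q).
have zE : zeta_h mu w p q = z%:E by rewrite fineK.
have z0 : (0 < z)%R by rewrite -lte_fin -zE.
have z1 : (z <= 1)%R by rewrite -lee_fin -zE zeta_h_le1.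
(* c1 p + c2 q = z ((1 - w) p + w q) - p, whose integral is z - 1 *)
pose c1 := (z * (1 - w) - 1)%R; pose c2 := (z * w)%R.
have Mh_ge0 x : (0 <= harm w (p x) (q x) / z)%R by rewrite divr_ge0 ?harm_ge0 ?(ltW z0).
have key : \int[mu]_x kl_pt (p x) (harm w (p x) (q x) / z) <=
    \int[mu]_x kl_pt (p x) (q x) + \int[mu]_x (c1 * p x + c2 * q x)%:E.
  apply: (le_integralD_integrable measurableT).
  - apply: measurable_kl_pt => //.
    by apply: measurable_funM; [exact: measurable_harm | exact: measurable_cst].
  - exact: measurable_kl_pt.
  - exact: integrable_density_comb.
  - exact: integrableN (density_integrable dq).
  - move=> x _ /=; apply: le_trans (kl_pt_ge_sub (p0 x) (q0 x)).
    by rewrite lee_fin lerBrDr addNr.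
  - move=> x _; have -> : (c1 * p x + c2 * q x = z * ((1 - w) * p x + w * q x) - p x)%R.
      by rewrite /c1 /c2; ring.
    exact: kl_pt_harm_le.
apply: le_trans key _.
by rewrite integral_density_comb // geeDl // lee_fin /c1 /c2; lra.
Qed.

End harmonic_mean_divergence.

Theorem proposition1 (d : measure_display) (T : measurableType d) (R : realType)
  (mu : {measure set T -> \bar R}) (p1 p2 : T -> R) (w : R) :
  is_density mu p1 -> is_density mu p2 ->
  0 <= w -> w <= 1 ->
  (0 < zeta_h mu w p1 p2)%E ->
  (KL mu p1 (Mh mu w p1 p2) <= KL mu p1 p2)%E /\
  (KL mu p2 (Mh mu w p1 p2) <= KL mu p2 p1)%E.
Proof.
move=> d1 d2 w0 w1 zeta_gt0.
have w01 : 0 <= w <= 1 by rewrite w0 w1.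
have w01' : 0 <= 1 - w <= 1 by rewrite subr_ge0 w1 lerBlDr lerDl w0.
have zetaE : zeta_h mu w p1 p2 = zeta_h mu (1 - w) p2 p1.
  by rewrite /zeta_h; under eq_integral do rewrite harm_sym.
have MhE : Mh mu w p1 p2 = Mh mu (1 - w) p2 p1.
  by apply/funext => x; rewrite /Mh zetaE harm_sym.
split; first exact: KL_Mh_le.
by rewrite MhE; apply: KL_Mh_le; rewrite -?zetaE.
Qed.
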